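(* Let $f$ be an equivariant function between sets of strings over polynomial orbit-finite alphabets. If for some tuple of atoms $\bar a$ the function $f$ is a composition of $\bar a$-primes, then $f$ is a composition of primes.
   Context: Atoms $\mathbb A$ are a countably infinite set; atom automorphisms are bijections of $\mathbb A$; polynomial orbit-finite sets are built from $\mathbb A$ and singletons by finite products and disjoint unions. A function is $\bar a$-supported if $\pi\circ f\circ\pi^{-1}=f$ for every automorphism $\pi$ fixing $\bar a$ pointwise; equivariant means supported by the empty tuple. Compositions of $\bar a$-primes: the smallest class of functions containing (i) length-preserving homomorphisms obtained by lifting letterwise an $\bar a$-supported function $\Sigma\to\Gamma$ between polynomial orbit-finite sets, (ii) functions computed by classical Mealy machines (finite alphabets, finite states, deterministic transition $Q\times\Sigma\to Q\times\Gamma$ outputting one letter per input letter), (iii) atom propagation $(\mathbb A+\{\epsilon,\downarrow\})^*\to(\mathbb A+\bot)^*$ (position $i$ outputs the atom of position $j$ if $i$ is labelled $\downarrow$, $j<i$ carries an atom and all positions strictly between are labelled $\epsilon$; otherwise $\bot$), closed under sequential composition and parallel composition $f_1|f_2:(\Sigma_1\times\Sigma_2)^*\to(\Gamma_1\times\Gamma_2)^*$ (apply $f_i$ to the $i$-th projection). Compositions of primes are compositions of $\bar a$-primes for $\bar a$ the empty tuple (i.e. with equivariant homomorphisms). *)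

From mathcomp Require Import all_boot.
Set Implicit Arguments. Unset Strict Implicit. Unset Printing Implicit Defensive.

Definition atom := nat.

(** Atom automorphisms: bijections of the atoms (not necessarily finitary). *)
Record aut := Aut { aut_fun : atom -> atom; aut_inv : atom -> atom;
                    aut_K : cancel aut_fun aut_inv; aut_Ki : cancel aut_inv aut_fun }.

(** Codes for polynomial orbit-finite sets: built from A and singletons by
    finite products and disjoint unions. *)
Inductive pof := PAtom | PUnit | PProd of pof & pof | PSum of pof & pof.

Fixpoint pof_ty (S : pof) : Type :=
  match S with
  | PAtom => atom
  | PUnit => unit
  | PProd A B => (pof_ty A * pof_ty B)%type
  | PSum A B => (pof_ty A + pof_ty B)%type
  end.

Fixpoint pact (g : atom -> atom) (S : pof) : pof_ty S -> pof_ty S :=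
  match S return pof_ty S -> pof_ty S with
  | PAtom => fun a => g a
  | PUnit => fun u => u
  | PProd A B => fun p => (@pact g A p.1, @pact g B p.2)
  | PSum A B => fun s => match s with inl x => inl (@pact g A x) | inr y => inr (@pact g B y) end
  end.

Definition supported (abar : seq atom) (S G : pof) (h : pof_ty S -> pof_ty G) : Prop :=
  forall pi : aut, (forall a, a \in abar -> aut_fun pi a = a) ->
    forall x, @pact (aut_fun pi) G (h (@pact (aut_inv pi) S x)) = h x.

Definition equivariant_str (S G : pof) (f : seq (pof_ty S) -> seq (pof_ty G)) : Prop :=
  forall pi : aut, forall w,
    map (@pact (aut_fun pi) G) (f (map (@pact (aut_inv pi) S) w)) = f w.

(** Finite (atom-free) alphabets. *)
Fixpoint atomless (S : pof) : bool :=
  match S with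
  | PAtom => false
  | PUnit => true
  | PProd A B | PSum A B => atomless A && atomless B
  end.

Fixpoint mealy_run (Q X Y : Type) (delta : Q -> X -> Q * Y) (q : Q) (w : seq X) : seq Y :=
  match w with
  | [::] => [::]
  | x :: w' => let: (q', y) := delta q x in y :: mealy_run delta q' w'
  end.

(** Atom propagation. Input alphabet A + {eps, down}: inl a = atom a,
    inr (inl tt) = eps, inr (inr tt) = down. Output alphabet A + {bot}. *)
Definition prop_in := PSum PAtom (PSum PUnit PUnit).
Definition prop_out := PSum PAtom PUnit.

(** Given the reversed prefix before position i, find the nearest letter that is not eps. *)
Fixpoint last_non_eps (rp : seq (pof_ty prop_in)) : option (pof_ty prop_in) :=
  match rp with
  | [::] => None
  | inr (inl _) :: rp' => last_non_eps rp'
  | x :: _ => Some x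
  end.

Definition prop_letter (w : seq (pof_ty prop_in)) (i : nat) (x : pof_ty prop_in)
  : pof_ty prop_out :=
  match x with
  | inr (inr _) =>
      match last_non_eps (rev (take i w)) with
      | Some (inl a) => inl a
      | _ => inr tt
      end
  | _ => inr tt
  end.

Definition atom_propagation (w : seq (pof_ty prop_in)) : seq (pof_ty prop_out) :=
  [seq prop_letter w i x | '(i, x) <- zip (iota 0 (size w)) w].

Inductive comp_primes (abar : seq atom) :
  forall S G : pof, (seq (pof_ty S) -> seq (pof_ty G)) -> Prop :=
  | CP_hom S G (h : pof_ty S -> pof_ty G) :
      supported abar h -> comp_primes abar (map h)
  | CP_mealy S G (Q : finType) (q0 : Q) (delta : Q -> pof_ty S -> Q * pof_ty G) :
      atomless S -> atomless G -> comp_primes abar (mealy_run delta q0)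
  | CP_prop : @comp_primes abar prop_in prop_out atom_propagation
  | CP_seq S D G (f : seq (pof_ty S) -> seq (pof_ty D)) (g : seq (pof_ty D) -> seq (pof_ty G)) :
      comp_primes abar f -> comp_primes abar g -> comp_primes abar (fun w => g (f w))
  | CP_par S1 S2 G1 G2 (f1 : seq (pof_ty S1) -> seq (pof_ty G1))
      (f2 : seq (pof_ty S2) -> seq (pof_ty G2)) :
      comp_primes abar f1 -> comp_primes abar f2 ->
      @comp_primes abar (PProd S1 S2) (PProd G1 G2)
        (fun w => zip (f1 (unzip1 w)) (f2 (unzip2 w))).

(* Every letter is encoded over the alphabet T k S in which each atom
   slot may also hold one of k+1 atom-free tags; [enc] replaces each a_i by the
   tag i.  By induction on the composition, every abar-prime has an equivariant
   counterpart F (a composition of primes) with F o enc = enc o f.  Mealy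
   machines and combinators are immediate; atom propagation is simulated by
   atom propagation run in parallel with a Mealy machine remembering the last
   tag; an abar-supported homomorphism h becomes the equivariant letter map
   y |-> p.enc(h(dec(p^-1.y))) for any automorphism p moving the atoms of y
   off abar — well defined because h is abar-supported.

   Both f and F are equivariant, so conjugating F o enc = enc o f
   by an automorphism that moves all atoms of a word away from abar shows that
   F also commutes with the tag-free embedding [embed].  Hence f is obtained from
   w |-> (embed w, w) by F in parallel with the identity, followed by the
   equivariant letter map that reads off the embedded output. *)
From mathcomp Require Import all_boot.
From Stdlib Require Import FunctionalExtensionality.
Set Implicit Arguments. Unset Strict Implicit. Unset Printing Implicit Defensive.

Fixpoint atoms (S : pof) : pof_ty S -> seq atom :=
  match S return pof_ty S -> seq atom with
  | PAtom => fun a => [:: a]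
  | PUnit => fun _ => [::]
  | PProd A B => fun p => atoms p.1 ++ atoms p.2
  | PSum A B => fun s => match s with inl x => atoms x | inr y => atoms y end
  end.

Lemma pact_ext (g g' : atom -> atom) S (x : pof_ty S) :
  (forall a, a \in atoms x -> g a = g' a) -> pact g x = pact g' x.
Proof.
elim: S x => [a|u|A IHA B IHB [x y]|A IHA B IHB [x|y]] /= H.
- by apply: H; rewrite inE.
- by [].
- by rewrite (IHA x) ?(IHB y) // => a Ha; apply: H; rewrite mem_cat Ha ?orbT.
- by rewrite (IHA x).
- by rewrite (IHB y).
Qed.

Lemma pact_comp (g g' : atom -> atom) S (x : pof_ty S) :
  pact g (pact g' x) = pact (g \o g') x.
Proof. by elim: S x => [a|u|A IHA B IHB [x y]|A IHA B IHB [x|y]] //=; rewrite ?IHA ?IHB. Qed.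

Lemma pact_id (g : atom -> atom) S (x : pof_ty S) :
  (forall a, g a = a) -> pact g x = x.
Proof.
by move=> gid; elim: S x => [a|u|A IHA B IHB [x y]|A IHA B IHB [x|y]] //=; rewrite ?IHA ?IHB.
Qed.

Lemma atoms_pact (g : atom -> atom) S (x : pof_ty S) :
  atoms (pact g x) = map g (atoms x).
Proof.
elim: S x => [a|u|A IHA B IHB [x y]|A IHA B IHB [x|y]] //=.
by rewrite IHA IHB map_cat.
Qed.

Lemma atoms_atomless S (x : pof_ty S) : atomless S -> atoms x = [::].
Proof.
elim: S x => [a|u|A IHA B IHB [x y]|A IHA B IHB [x|y]] //= /andP[hA hB];
  by rewrite ?IHA ?IHB.
Qed.

Lemma pact_atomless (g : atom -> atom) S (x : pof_ty S) :
  atomless S -> pact g x = x.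
Proof. by move=> hS; rewrite (@pact_ext g id) ?pact_id // => a; rewrite atoms_atomless. Qed.

Definition aut_id : aut := @Aut id id (fun _ => erefl) (fun _ => erefl).

Definition aut_comp (p r : aut) : aut.
Proof.
refine (@Aut (aut_fun p \o aut_fun r) (aut_inv r \o aut_inv p) _ _).
- by move=> x /=; rewrite aut_K aut_K.
- by move=> x /=; rewrite aut_Ki aut_Ki.
Defined.

Definition aut_invol (g : atom -> atom) (H : involutive g) : aut := @Aut g g H H.

Lemma pactK (p : aut) S (x : pof_ty S) : pact (aut_fun p) (@pact (aut_inv p) S x) = x.
Proof. by rewrite pact_comp pact_id // => a /=; rewrite aut_Ki. Qed.

Lemma aut_fix_mem (r : aut) (ab : seq atom) :
  (forall a, a \in ab -> aut_fun r a = a) -> forall a, (aut_fun r a \in ab) = (a \in ab).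
Proof.
move=> H a; apply/idP/idP => h; last by rewrite H.
by rewrite -(aut_K r a) -(H _ h) aut_K.
Qed.

Lemma aut_fix_inv (r : aut) (ab : seq atom) :
  (forall a, a \in ab -> aut_fun r a = a) -> forall a, a \in ab -> aut_inv r a = a.
Proof. by move=> H a h; rewrite -{1}(H a h) aut_K. Qed.

Definition swapf (a c : atom) (n : atom) : atom :=
  if n == a then c else if n == c then a else n.

Lemma swapf_inv a c : involutive (swapf a c).
Proof.
move=> n; rewrite /swapf.
case: (eqVneq n a) => [->|na]; first by rewrite eqxx; case: eqVneq.
case: (eqVneq n c) => [->|nc]; first by rewrite eqxx.
by rewrite (negbTE na) (negbTE nc).
Qed.

Definition blockf (M n : nat) : nat :=
  if n < M then n + M else if n < M + M then n - M else n.

Lemma blockf_inv M : involutive (blockf M).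
Proof.
move=> n; rewrite /blockf.
case: (ltnP n M) => h1.
  have -> : (n + M < M) = false by apply/negbTE; rewrite -leqNgt leq_addl.
  by rewrite ltn_add2r h1 addnK.
case: (ltnP n (M + M)) => h2; first by rewrite ltn_subLR // h2 subnK.
by rewrite ltnNge h1 /= ltnNge h2.
Qed.

Lemma blockf_low M n : n < M -> M <= blockf M n.
Proof. by rewrite /blockf => ->; apply: leq_addl. Qed.

Definition block (M : nat) : aut := aut_invol (blockf_inv M).

(** [maxl s] bounds every element of [s]: [(maxl s).+1] is fresh for [s]. *)
Fixpoint maxl (s : seq nat) : nat := if s is x :: s' then maxn x (maxl s') else 0.

Lemma maxl_ge s a : a \in s -> a <= maxl s.
Proof.
elim: s => //= x s IH; rewrite inE => /orP[/eqP->|h]; first by rewrite leq_maxl.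
by rewrite (leq_trans (IH h)) // leq_maxr.
Qed.

Lemma maxl_lt s a : a \in s -> a < (maxl s).+1.
Proof. by move/maxl_ge. Qed.

Lemma exchange_aut (p q : aut) (s : seq atom) :
  (forall a b, a \in s -> b \in s -> aut_inv p a != aut_inv q b) ->
  exists r : aut,
    (forall a, a \in s -> aut_inv r (aut_inv q a) = aut_inv p a) /\
    (forall n, n \notin map (aut_inv p) s -> n \notin map (aut_inv q) s -> aut_fun r n = n).
Proof.
move=> D.
pose Zp := map (aut_inv p) s; pose Zq := map (aut_inv q) s.
pose rho n := if n \in Zp then aut_inv q (aut_fun p n)
              else if n \in Zq then aut_inv p (aut_fun q n) else n.
have nZ a : a \in s -> aut_inv q a \notin Zp.
  by move=> ha; apply/mapP => -[b hb E]; move: (D b a hb ha); rewrite E eqxx.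
have rho_p a : a \in s -> rho (aut_inv p a) = aut_inv q a.
  by move=> ha; rewrite /rho map_f // aut_Ki.
have rho_q a : a \in s -> rho (aut_inv q a) = aut_inv p a.
  by move=> ha; rewrite /rho (negbTE (nZ a ha)) map_f // aut_Ki.
have rho_out n : n \notin Zp -> n \notin Zq -> rho n = n.
  by move=> h1 h3; rewrite /rho (negbTE h1) (negbTE h3).
have rhoK : involutive rho.
  move=> n; case h1: (n \in Zp); first by case/mapP: h1 => a ha ->; rewrite rho_p // rho_q.
  case h3: (n \in Zq); first by case/mapP: h3 => a ha ->; rewrite rho_q // rho_p.
  by rewrite !rho_out ?h1 ?h3.
by exists (aut_invol rhoK); split=> [a ha|n]; [exact: rho_q | exact: rho_out].
Qed.

Lemma unzip1_map (A B C D : Type) (f : A * B -> C * D) (g : A -> C) w :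
  (forall p, (f p).1 = g p.1) -> unzip1 (map f w) = map g (unzip1 w).
Proof. by move=> fg; rewrite /unzip1 -!map_comp; apply: eq_map. Qed.

Lemma unzip2_map (A B C D : Type) (f : A * B -> C * D) (g : B -> D) w :
  (forall p, (f p).2 = g p.2) -> unzip2 (map f w) = map g (unzip2 w).
Proof. by move=> fg; rewrite /unzip2 -!map_comp; apply: eq_map. Qed.

Lemma map_pair_zip (A B C D : Type) (f : A -> C) (g : B -> D) s t :
  map (fun p => (f p.1, g p.2)) (zip s t) = zip (map f s) (map g t).
Proof. by elim: s t => [|x s IH] [|y t] //=; rewrite IH. Qed.

Definition prop_state (st : option (pof_ty prop_in)) (x : pof_ty prop_in) :=
  match x with inr (inl _) => st | _ => Some x end.

Definition prop_out_letter (st : option (pof_ty prop_in)) (x : pof_ty prop_in) : pof_ty prop_out :=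
  match x with
  | inr (inr _) => match st with Some (inl a) => inl a | _ => inr tt end
  | _ => inr tt
  end.

Fixpoint prop_run st (w : seq (pof_ty prop_in)) : seq (pof_ty prop_out) :=
  if w is x :: w' then prop_out_letter st x :: prop_run (prop_state st x) w' else [::].

(** On a suffix w of p ++ w, the definition of atom propagation is the run
    started in the state left by p; hence the two definitions agree. *)
Lemma prop_run_suffix p w :
  [seq prop_letter (p ++ w) i x | '(i, x) <- zip (iota (size p) (size w)) w]
  = prop_run (last_non_eps (rev p)) w.
Proof.
elim: w p => [|x w IH] p //=.
have E := IH (rcons p x); rewrite cat_rcons size_rcons rev_rcons in E.
by rewrite E {E} /prop_letter take_size_cat.
Qed.

Lemma atom_propagationE w : atom_propagation w = prop_run None w.
Proof. by rewrite /atom_propagation -(prop_run_suffix [::]). Qed.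

Lemma prop_run_pact g st w :
  prop_run (omap (@pact g prop_in) st) (map (@pact g prop_in) w)
  = map (@pact g prop_out) (prop_run st w).
Proof.
elim: w st => [|x w IH] st //=; rewrite -IH.
by case: x => [a|[[]|[]]] //=; case: st => [[b|[[]|[]]]|].
Qed.

Lemma size_mealy (Q X Y : Type) (d : Q -> X -> Q * Y) q w : size (mealy_run d q w) = size w.
Proof. by elim: w q => //= x w IH q; case: (d q x) => q' y /=; rewrite IH. Qed.

Lemma size_prop_run st w : size (prop_run st w) = size w.
Proof. by elim: w st => //= x w IH st; rewrite IH. Qed.

Lemma cp_size ab S G (f : seq (pof_ty S) -> seq (pof_ty G)) :
  comp_primes ab f -> forall w, size (f w) = size w.
Proof.
elim=> {S G f}.
- by move=> S G h _ w; rewrite size_map.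
- by move=> S G Q q0 d _ _ w; rewrite size_mealy.
- by move=> w; rewrite atom_propagationE size_prop_run.
- by move=> S D G f g _ Hf _ Hg w; rewrite Hg Hf.
- by move=> S1 S2 G1 G2 f1 f2 _ H1 _ H2 w; rewrite size_zip H1 H2 !size_map minnn.
Qed.

Lemma eqv_inv S G (f : seq (pof_ty S) -> seq (pof_ty G)) (p : aut) w :
  equivariant_str f -> f (map (@pact (aut_inv p) S) w) = map (@pact (aut_inv p) G) (f w).
Proof.
move=> H; rewrite -[in RHS](H p w) -map_comp [RHS](@eq_map _ _ _ id) ?map_id // => x /=.
by rewrite pact_comp pact_id // => a /=; rewrite aut_K.
Qed.

Lemma cp_eqv S G (f : seq (pof_ty S) -> seq (pof_ty G)) :
  comp_primes [::] f -> equivariant_str f.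
Proof.
elim=> {S G f}.
- by move=> S G h H p w; rewrite -!map_comp; apply: eq_map => x /=; apply: H.
- move=> S G Q q0 d hS hG p w.
  by rewrite !(eq_map (fun x => pact_atomless _ x _)) // !map_id.
- move=> p w; have := prop_run_pact (aut_inv p) None w; rewrite !atom_propagationE /= => ->.
  by rewrite -map_comp (@eq_map _ _ _ id) ?map_id // => -[x|[]] //=; rewrite aut_Ki.
- by move=> S D G f g _ Hf _ Hg p w; rewrite (eqv_inv p w Hf) Hg.
- move=> S1 S2 G1 G2 f1 f2 _ H1 _ H2 p w /=.
  rewrite (unzip1_map (g := @pact (aut_inv p) S1)) // (unzip2_map (g := @pact (aut_inv p) S2)) //.
  by rewrite (map_pair_zip (@pact (aut_fun p) G1) (@pact (aut_fun p) G2)) H1 H2.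
Qed.

(** * Tagged alphabets *)

Fixpoint Tg (n : nat) : pof := if n is n'.+1 then PSum PUnit (Tg n') else PUnit.

Fixpoint tg_of (n : nat) : nat -> pof_ty (Tg n) :=
  match n return nat -> pof_ty (Tg n) with
  | 0 => fun _ => tt
  | n'.+1 => fun j => if j is j'.+1 then inr (tg_of n' j') else inl tt
  end.

Fixpoint nat_of_tg (n : nat) : pof_ty (Tg n) -> nat :=
  match n return pof_ty (Tg n) -> nat with
  | 0 => fun _ => 0
  | n'.+1 => fun t => match t with inl _ => 0 | inr t' => (nat_of_tg t').+1 end
  end.

Lemma nat_of_tgK n j : j <= n -> nat_of_tg (tg_of n j) = j.
Proof. by elim: n j => [|n IH] [|j] //= h; rewrite IH. Qed.

Lemma atomless_Tg n : atomless (Tg n).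
Proof. by elim: n. Qed.

Lemma pact_Tg g n (t : pof_ty (Tg n)) : pact g t = t.
Proof. by rewrite pact_atomless ?atomless_Tg. Qed.

Fixpoint T (n : nat) (S : pof) : pof :=
  match S with
  | PAtom => PSum PAtom (Tg n)
  | PUnit => PUnit
  | PProd A B => PProd (T n A) (T n B)
  | PSum A B => PSum (T n A) (T n B)
  end.

Lemma atomless_T n S : atomless (T n S) = atomless S.
Proof. by elim: S => //= A -> B ->. Qed.

Fixpoint embed n (S : pof) : pof_ty S -> pof_ty (T n S) :=
  match S return pof_ty S -> pof_ty (T n S) with
  | PAtom => fun a => inl a
  | PUnit => fun u => u
  | PProd A B => fun p => (embed n p.1, embed n p.2)
  | PSum A B => fun s => match s with inl x => inl (embed n x) | inr y => inr (embed n y) end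
  end.

Fixpoint unembed n (S : pof) : pof_ty (T n S) -> option (pof_ty S) :=
  match S return pof_ty (T n S) -> option (pof_ty S) with
  | PAtom => fun y => match y with inl a => Some a | inr _ => None end
  | PUnit => fun u => Some u
  | PProd A B => fun p => match unembed p.1, unembed p.2 with
                          | Some x, Some y => Some (x, y) | _, _ => None end
  | PSum A B => fun s => match s with inl x => omap inl (unembed x)
                                    | inr y => omap inr (unembed y) end
  end.

Lemma embedK n S (x : pof_ty S) : unembed (embed n x) = Some x.
Proof. by elim: S x => [a|u|A IHA B IHB [x y]|A IHA B IHB [x|y]] //=; rewrite ?IHA ?IHB. Qed.

Lemma embed_pact n g S (x : pof_ty S) : embed n (pact g x) = pact g (embed n x).
Proof. by elim: S x => [a|u|A IHA B IHB [x y]|A IHA B IHB [x|y]] //=; rewrite ?IHA ?IHB. Qed.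

Lemma unembed_pact n g S (y : pof_ty (T n S)) :
  unembed (pact g y) = omap (@pact g S) (unembed y).
Proof.
elim: S y => [[a|t]|u|A IHA B IHB [x y]|A IHA B IHB [x|y]] //=.
- by rewrite IHA IHB; case: (unembed x) => [?|]; case: (unembed y).
- by rewrite IHA; case: (unembed x).
- by rewrite IHB; case: (unembed y).
Qed.

Section Encoding.
Variable ab : seq atom.
Local Notation k := (size ab).
Hypothesis ab_gt0 : 0 < k.

Lemma head_ab : head 0 ab \in ab.
Proof. by move: ab_gt0; case: (ab) => //= b s _; rewrite inE eqxx. Qed.

(** [enc] replaces the i-th parameter atom by the tag i; [dec] undoes it,
    reading out-of-range tags as the first parameter. *)
Fixpoint enc (S : pof) : pof_ty S -> pof_ty (T k S) :=
  match S return pof_ty S -> pof_ty (T k S) with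
  | PAtom => fun a => if a \in ab then inr (tg_of k (index a ab)) else inl a
  | PUnit => fun u => u
  | PProd A B => fun p => (enc p.1, enc p.2)
  | PSum A B => fun s => match s with inl x => inl (enc x) | inr y => inr (enc y) end
  end.

Fixpoint dec (S : pof) : pof_ty (T k S) -> pof_ty S :=
  match S return pof_ty (T k S) -> pof_ty S with
  | PAtom => fun y => match y with inl a => a | inr t => nth (head 0 ab) ab (nat_of_tg t) end
  | PUnit => fun u => u
  | PProd A B => fun p => (dec p.1, dec p.2)
  | PSum A B => fun s => match s with inl x => inl (dec x) | inr y => inr (dec y) end
  end.

Lemma decK S (x : pof_ty S) : dec (enc x) = x.
Proof.
elim: S x => [a|u|A IHA B IHB [x y]|A IHA B IHB [x|y]] /=; rewrite ?IHA ?IHB //.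
by case: ifP => // h; rewrite nat_of_tgK ?nth_index // ltnW // index_mem.
Qed.

Lemma atoms_enc S (x : pof_ty S) a : a \in atoms (enc x) -> (a \in atoms x) && (a \notin ab).
Proof.
elim: S x => [b|u|A IHA B IHB [x y]|A IHA B IHB [x|y]] //=.
- case: ifP => hb /=; first by rewrite atoms_atomless ?atomless_Tg.
  by rewrite !inE => /eqP->; rewrite eqxx hb.
- by rewrite !mem_cat => /orP[/IHA/andP[-> ->]|/IHB/andP[-> ->]]; rewrite ?orbT.
- exact: IHA.
- exact: IHB.
Qed.

Lemma nth_ab n : nth (head 0 ab) ab n \in ab.
Proof. by case: (ltnP n k) => h; [rewrite mem_nth | rewrite nth_default // head_ab]. Qed.

Lemma atoms_dec S (y : pof_ty (T k S)) a :
  a \in atoms (dec y) -> (a \in atoms y) || (a \in ab).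
Proof.
elim: S y => [[b|t]|u|A IHA B IHB [x y]|A IHA B IHB [x|y]] //=.
- by move=> ->.
- by rewrite inE => /eqP->; rewrite nth_ab orbT.
- by rewrite !mem_cat => /orP[/IHA/orP[->|->]|/IHB/orP[->|->]]; rewrite ?orbT.
- exact: IHA.
- exact: IHB.
Qed.

Lemma dec_pact g S (y : pof_ty (T k S)) :
  (forall a, a \in ab -> g a = a) -> dec (pact g y) = pact g (dec y).
Proof.
move=> gfix.
elim: S y => [[b|t]|u|A IHA B IHB [x y]|A IHA B IHB [x|y]] //=; rewrite ?IHA ?IHB //.
by rewrite pact_Tg gfix ?nth_ab.
Qed.

Lemma enc_pact g S (x : pof_ty S) :
  (forall a, a \in ab -> g a = a) -> (forall a, (g a \in ab) = (a \in ab)) ->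
  enc (pact g x) = pact g (enc x).
Proof.
move=> gfix gab.
elim: S x => [a|u|A IHA B IHB [x y]|A IHA B IHB [x|y]] //=; rewrite ?IHA ?IHB //.
by rewrite gab; case: ifP => // h; rewrite pact_Tg gfix.
Qed.

Lemma enc_embed S (x : pof_ty S) :
  (forall a, a \in atoms x -> a \notin ab) -> enc x = embed k x.
Proof.
elim: S x => [a|u|A IHA B IHB [x y]|A IHA B IHB [x|y]] //= H.
- by move: (H a); rewrite inE eqxx => /(_ isT) /negbTE ->.
- by rewrite IHA ?IHB // => a h; apply: H; rewrite mem_cat h ?orbT.
- by rewrite IHA.
- by rewrite IHB.
Qed.
End Encoding.

(** * Translating a parameterised homomorphism *)

Section Homomorphism.
Variables (ab : seq atom) (S G : pof) (h : pof_ty S -> pof_ty G).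
Hypothesis ab_gt0 : 0 < size ab.
Hypothesis h_supp : supported ab h.
Local Notation k := (size ab).

(** The atoms of h x are among those of x and the parameters: otherwise
    swapping an extra atom with a fresh one would change h x but not x. *)
Lemma atoms_supported x a : a \in atoms (h x) -> (a \in atoms x) || (a \in ab).
Proof.
move=> ha; apply/negPn/negP; rewrite negb_or => /andP[nx nab].
set s := atoms x ++ ab ++ atoms (h x); set c := (maxl s).+1.
have c_new b : b \in s -> b != c by move=> /maxl_lt; rewrite ltn_neqAle => /andP[].
pose sw := aut_invol (swapf_inv a c).
have sw_out b : b != a -> b \in s -> aut_fun sw b = b.
  by move=> ba bs; rewrite /= /swapf (negbTE ba) (negbTE (c_new b bs)).
have sw_ab b : b \in ab -> aut_fun sw b = b.
  by move=> hb; apply: sw_out; [apply: contraNneq nab => <- | rewrite !mem_cat hb orbT].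
have sw_x : pact (aut_inv sw) x = x.
  rewrite (@pact_ext _ id) ?pact_id // => b hb.
  by apply: sw_out; [apply: contraNneq nx => <- | rewrite mem_cat hb].
have : c \in atoms (pact (aut_fun sw) (h x)).
  by rewrite atoms_pact; apply/mapP; exists a => //=; rewrite /swapf eqxx.
rewrite -{1}sw_x h_supp // => hc.
by have := c_new c; rewrite !mem_cat hc !orbT eqxx => /(_ isT).
Qed.

Definition hom_via (y : pof_ty (T k S)) (p : aut) : pof_ty (T k G) :=
  pact (aut_fun p) (enc ab (h (dec (ab:=ab) (pact (aut_inv p) y)))).

Definition admissible (y : pof_ty (T k S)) (p : aut) :=
  forall a, a \in atoms (pact (aut_inv p) y) -> a \notin ab.

Lemma hom_via_coset y p (r : aut) : (forall a, a \in ab -> aut_fun r a = a) ->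
  hom_via y (aut_comp p r) = hom_via y p.
Proof.
move=> rfix; rewrite /hom_via /= -pact_comp -(pact_comp (aut_inv r)).
rewrite dec_pact //; last exact: aut_fix_inv.
by rewrite -(enc_pact _ rfix (aut_fix_mem rfix)) h_supp.
Qed.

Lemma hom_via_agree y p q : (forall a, a \in atoms y -> aut_inv p a = aut_inv q a) ->
  hom_via y p = hom_via y q.
Proof.
move=> pq; rewrite /hom_via (@pact_ext _ (aut_inv q) _ y) //.
apply: pact_ext => b /atoms_enc /andP[hb nb].
have := atoms_supported hb; rewrite (negbTE nb) orbF => /(atoms_dec ab_gt0).
rewrite (negbTE nb) orbF atoms_pact => /mapP[a ha ->].
by rewrite aut_Ki -pq // aut_Ki.
Qed.

Lemma hom_via_disjoint y p q : admissible y p -> admissible y q ->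
  (forall a b, a \in atoms y -> b \in atoms y -> aut_inv p a != aut_inv q b) ->
  hom_via y p = hom_via y q.
Proof.
move=> vp vq D; have [r [r_pq r_out]] := exchange_aut D.
have rfix a : a \in ab -> aut_fun r a = a.
  move=> ha; apply: r_out; apply/negP => hz.
  - by move: (vp a); rewrite atoms_pact hz ha => /(_ isT).
  - by move: (vq a); rewrite atoms_pact hz ha => /(_ isT).
by rewrite -(hom_via_coset y q rfix); apply: hom_via_agree => a ha /=; rewrite r_pq.
Qed.

(** Hence all admissible automorphisms give the same value: compare both with
    a third one whose image of the atoms of y avoids theirs. *)
Lemma hom_via_wd y p q : admissible y p -> admissible y q -> hom_via y p = hom_via y q.
Proof.
move=> vp vq.
set M := (maxl (ab ++ map (aut_inv p) (atoms y) ++ map (aut_inv q) (atoms y))).+1.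
pose p3 := aut_comp p (block M).
have lt_p a : a \in atoms y -> aut_inv p a < M.
  by move=> ha; rewrite maxl_lt // !mem_cat map_f ?orbT.
have lt_q a : a \in atoms y -> aut_inv q a < M.
  by move=> ha; rewrite maxl_lt // !mem_cat map_f ?orbT.
have ge_p3 a : a \in atoms y -> M <= aut_inv p3 a by move=> ha; apply/blockf_low/lt_p.
have v3 : admissible y p3.
  move=> a; rewrite atoms_pact => /mapP[c hc ->]; apply/negP => hab.
  by have := ge_p3 c hc; rewrite leqNgt maxl_lt // mem_cat hab.
have far (u : aut) : (forall a, a \in atoms y -> aut_inv u a < M) ->
    forall a b, a \in atoms y -> b \in atoms y -> aut_inv u a != aut_inv p3 b.
  by move=> lt a b ha hb; apply/negP => /eqP E; have := ge_p3 b hb; rewrite -E leqNgt lt.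
by rewrite (@hom_via_disjoint y p p3) ?(@hom_via_disjoint y q p3) //; apply: far.
Qed.

Definition tag_hom (y : pof_ty (T k S)) : pof_ty (T k G) :=
  hom_via y (block (maxl (ab ++ atoms y)).+1).

Lemma block_admissible y : admissible y (block (maxl (ab ++ atoms y)).+1).
Proof.
move=> a; rewrite atoms_pact => /mapP[c hc ->]; apply/negP => hab.
have cM : c < (maxl (ab ++ atoms y)).+1 by rewrite maxl_lt // mem_cat hc orbT.
by have := blockf_low cM; rewrite leqNgt maxl_lt // mem_cat hab.
Qed.

Lemma tag_hom_enc x : tag_hom (enc ab x) = enc ab (h x).
Proof.
rewrite /tag_hom (@hom_via_wd (enc ab x) _ aut_id (@block_admissible _)).
  by rewrite /hom_via /= !pact_id // decK.
by move=> a /=; rewrite pact_id // => /atoms_enc /andP[].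
Qed.

Lemma tag_hom_supported : supported [::] tag_hom.
Proof.
move=> s _ y; rewrite /tag_hom; set y0 := pact (aut_inv s) y.
have -> : pact (aut_fun s) (hom_via y0 (block (maxl (ab ++ atoms y0)).+1))
          = hom_via y (aut_comp s (block (maxl (ab ++ atoms y0)).+1)).
  by rewrite /hom_via /= pact_comp /y0 pact_comp.
apply: hom_via_wd; last exact: block_admissible.
by move=> a /=; rewrite -pact_comp; apply: block_admissible.
Qed.
End Homomorphism.

(** * Translating atom propagation *)

Section Propagation.
Variable ab : seq atom.
Local Notation k := (size ab).

Definition prop_kind : pof := PSum (Tg k) (PSum PUnit (PSum PUnit PUnit)).

(** The Mealy machine emits a tag to output, "take the propagated value", or
    "output bot". *)
Definition prop_mark : pof := PSum (Tg k) (PSum PUnit PUnit).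

Definition strip (y : pof_ty (T k prop_in)) : pof_ty prop_in :=
  match y with
  | inl (inl a) => inl a
  | inl (inr _) => inr (inr tt)
  | inr e => inr e
  end.

Definition kind (y : pof_ty (T k prop_in)) : pof_ty prop_kind :=
  match y with
  | inl (inl _) => inr (inl tt)
  | inl (inr t) => inl t
  | inr (inl _) => inr (inr (inl tt))
  | inr (inr _) => inr (inr (inr tt))
  end.

(** The state is the tag of the last non-eps letter, if that letter is a tag. *)
Definition tag_tracker (q : option 'I_k.+1) (x : pof_ty prop_kind) :
  option 'I_k.+1 * pof_ty prop_mark :=
  match x with
  | inl t => (Some (inord (nat_of_tg t)), inr (inr tt))
  | inr (inl _) => (None, inr (inl tt))
  | inr (inr (inl _)) => (q, inr (inl tt))
  | inr (inr (inr _)) =>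
      (None, match q with Some j => inl (tg_of k j) | None => inr (inl tt) end)
  end.

Definition combine (p : pof_ty (PProd prop_out prop_mark)) : pof_ty (T k prop_out) :=
  match p.2 with
  | inl t => inl (inr t)
  | inr (inl _) => match p.1 with inl a => inl (inl a) | inr u => inr u end
  | inr (inr _) => inr tt
  end.

Definition dup (A : pof) (x : pof_ty A) : pof_ty (PProd A A) := (x, x).

Definition tag_propagation (w : seq (pof_ty (T k prop_in))) : seq (pof_ty (T k prop_out)) :=
  map combine (zip (atom_propagation (map strip (unzip1 (map (@dup _) w))))
                   (mealy_run tag_tracker None (map kind (unzip2 (map (@dup _) w))))).

Lemma tag_propagation_cp : comp_primes [::] tag_propagation.
Proof.
have Hdup : supported [::] (@dup (T k prop_in)).
  by move=> p _ x; apply: (f_equal2 pair (pactK p x) (pactK p x)).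
have Hstrip : supported [::] strip by move=> p _ [[a|t]|[[]|[]]] /=; rewrite ?aut_Ki.
have Hkind : supported [::] kind by move=> p _ [[a|t]|[[]|[]]] /=; rewrite ?pact_Tg.
have Hcomb : supported [::] combine.
  by move=> p _ [[a|[]] [t|[[]|[]]]] /=; rewrite ?pact_Tg ?aut_Ki.
have aK : atomless prop_kind by rewrite /= atomless_Tg.
have aO : atomless prop_mark by rewrite /= atomless_Tg.
have tracker_cp := @CP_mealy [::] prop_kind prop_mark _ None tag_tracker aK aO.
exact: (CP_seq (CP_hom Hdup)
         (CP_seq (CP_par (CP_seq (CP_hom Hstrip) (CP_prop _))
                         (CP_seq (CP_hom Hkind) tracker_cp))
                 (CP_hom Hcomb))).
Qed.

(** The state of the tracker reflects the propagation state of the original word. *)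
Definition tracked (st : option (pof_ty prop_in)) : option 'I_k.+1 :=
  match st with
  | Some (inl a) => if a \in ab then Some (inord (index a ab)) else None
  | _ => None
  end.

Lemma tag_propagation_run st (w : seq (pof_ty prop_in)) :
  map combine (zip (prop_run (omap (strip \o @enc ab prop_in) st)
                             (map (strip \o @enc ab prop_in) w))
                   (mealy_run tag_tracker (tracked st) (map (kind \o @enc ab prop_in) w)))
  = map (@enc ab prop_out) (prop_run st w).
Proof.
have index_le a : a \in ab -> index a ab <= k by move=> ha; rewrite ltnW // index_mem.
elim: w st => [|x w IH] st //=.
case: x => [a|[[]|[]]] /=.
- case ha: (a \in ab) => /=; have := IH (Some (inl a)); rewrite /= ha => <-.
  + by rewrite nat_of_tgK ?index_le.
  + by case: st => [[b|[[]|[]]]|].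
- by rewrite -IH; case: st => [[b|[[]|[]]]|].
- rewrite -(IH (Some (inr (inr tt)))) /=.
  case: st => [[b|[[]|[]]]|] //=; case hb: (b \in ab) => //=.
  by rewrite inordK ?ltnS ?index_le.
Qed.

Lemma tag_propagation_enc (w : seq (pof_ty prop_in)) :
  tag_propagation (map (@enc ab prop_in) w) = map (@enc ab prop_out) (atom_propagation w).
Proof.
rewrite /tag_propagation; set v := map (@enc ab prop_in) w.
have [-> ->] : unzip1 (map (@dup _) v) = v /\ unzip2 (map (@dup _) v) = v.
  by elim: (v) => //= x s [-> ->].
by rewrite !atom_propagationE -(tag_propagation_run None w) -!map_comp.
Qed.
End Propagation.

Lemma translate ab (ab_gt0 : 0 < size ab) S G (f : seq (pof_ty S) -> seq (pof_ty G)) :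
  comp_primes ab f ->
  exists F : seq (pof_ty (T (size ab) S)) -> seq (pof_ty (T (size ab) G)),
    comp_primes [::] F /\ forall w, F (map (@enc ab S) w) = map (@enc ab G) (f w).
Proof.
elim=> {S G f}.
- move=> S G h h_supp; exists (map (tag_hom h)); split.
    exact: CP_hom (tag_hom_supported ab_gt0 h_supp).
  by move=> w; rewrite -!map_comp; apply: eq_map => x /=; apply: tag_hom_enc.
- move=> S G Q q0 d hS hG.
  pose d' q (y : pof_ty (T (size ab) S)) :=
    let: (q', g) := d q (dec (ab:=ab) y) in (q', @enc ab G g).
  exists (mealy_run d' q0); split; first by apply: CP_mealy; rewrite atomless_T.
  move=> w; elim: w q0 => //= x w IH q; rewrite /d' decK.
  by case: (d q x) => q' g /=; rewrite -IH.
- by exists (@tag_propagation ab); split; [apply: tag_propagation_cp | apply: tag_propagation_enc].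
- move=> S D G f g _ [F1 [H1 E1]] _ [F2 [H2 E2]].
  by exists (fun w => F2 (F1 w)); split; [apply: CP_seq H1 H2 | move=> w; rewrite E1 E2].
- move=> S1 S2 G1 G2 f1 f2 _ [F1 [H1 E1]] _ [F2 [H2 E2]].
  exists (fun w => zip (F1 (unzip1 w)) (F2 (unzip2 w))); split; first exact: CP_par H1 H2.
  move=> w; rewrite (unzip1_map (g := @enc ab S1)) // (unzip2_map (g := @enc ab S2)) //.
  by rewrite E1 E2 -map_pair_zip.
Qed.

(** * From encoding to embedding *)

Definition satoms (A : pof) (w : seq (pof_ty A)) : seq atom := flatten (map (@atoms A) w).

Lemma satoms_pact g (A : pof) (w : seq (pof_ty A)) :
  satoms (map (@pact g A) w) = map g (satoms w).
Proof. by elim: w => //= x w IH; rewrite /satoms /= -/(satoms _) IH atoms_pact map_cat. Qed.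

Lemma map_enc_embed ab (A : pof) (w : seq (pof_ty A)) :
  (forall a, a \in satoms w -> a \notin ab) -> map (@enc ab A) w = map (@embed (size ab) A) w.
Proof.
elim: w => //= x w IH H.
by rewrite enc_embed ?IH // => a ha; apply: H; rewrite /satoms /= mem_cat ha ?orbT.
Qed.

(** After the block involution beyond the parameters and the atoms of w, no
    parameter occurs in w, so encoding is plain embedding. *)
Lemma enc_block ab A (w : seq (pof_ty A)) M :
  (forall a, a \in ab ++ satoms w -> a < M) ->
  map (@enc ab A) (map (@pact (blockf M) A) w)
  = map (@embed (size ab) A) (map (@pact (blockf M) A) w).
Proof.
move=> lt; apply: map_enc_embed => a; rewrite satoms_pact => /mapP[c hc ->].
apply/negP => hab; have cM : c < M by apply: lt; rewrite mem_cat hc orbT.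
by have := blockf_low cM; rewrite leqNgt lt // mem_cat hab.
Qed.

Lemma enc_to_embed (S G : pof) (f : seq (pof_ty S) -> seq (pof_ty G)) ab
  (F : seq (pof_ty (T (size ab) S)) -> seq (pof_ty (T (size ab) G))) :
  equivariant_str f -> equivariant_str F ->
  (forall w, F (map (@enc ab S) w) = map (@enc ab G) (f w)) ->
  forall w, F (map (@embed (size ab) S) w) = map (@embed (size ab) G) (f w).
Proof.
move=> Hf HF EF w; set M := (maxl (ab ++ satoms w ++ satoms (f w))).+1.
have lt_w a : a \in ab ++ satoms w -> a < M.
  by rewrite mem_cat => /orP[h|h]; apply: maxl_lt; rewrite !mem_cat h ?orbT.
have lt_fw a : a \in ab ++ satoms (f w) -> a < M.
  by rewrite mem_cat => /orP[h|h]; apply: maxl_lt; rewrite !mem_cat h ?orbT.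
have embed_block (A : pof) (s : seq (pof_ty A)) :
    map (@pact (blockf M) (T (size ab) A)) (map (@embed (size ab) A) s)
    = map (@embed (size ab) A) (map (@pact (blockf M) A) s).
  by rewrite -!map_comp; apply: eq_map => x /=; rewrite embed_pact.
rewrite -(HF (block M)) [aut_inv _]/= embed_block -enc_block // EF.
rewrite (eqv_inv (block M) w Hf) [aut_inv _]/= enc_block // -embed_block -map_comp.
rewrite (@eq_map _ _ _ id) ?map_id // => y.
by rewrite /= pact_comp pact_id // => a; rewrite /= blockf_inv.
Qed.

(** * Decoding *)

Fixpoint pdef (S : pof) : pof_ty S :=
  match S return pof_ty S with
  | PAtom => 0
  | PUnit => tt
  | PProd A B => (pdef A, pdef B)
  | PSum A B => inl (pdef A)
  end.

Lemma map_zip_left_inv (A A' B : Type) (e : A -> A') (r : A' * B -> A) s t :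
  (forall x y, r (e x, y) = x) -> size s = size t -> map r (zip (map e s) t) = s.
Proof. by move=> H; elim: s t => [|x s IH] [|y t] //= [E]; rewrite H IH. Qed.

Section Decoding.
Variables (k : nat) (S G : pof) (f : seq (pof_ty S) -> seq (pof_ty G)).
Variable F : seq (pof_ty (T k S)) -> seq (pof_ty (T k G)).
Hypothesis f_eqv : equivariant_str f.
Hypothesis f_size : forall w, size (f w) = size w.
Hypothesis F_cp : comp_primes [::] F.
Hypothesis F_embed : forall w, F (map (@embed k S) w) = map (@embed k G) (f w).

Definition pair_embed (x : pof_ty S) : pof_ty (PProd (T k S) S) := (embed k x, x).

(** Tagged letters never
    occur; they are sent to the equivariant fallback f applied to the input
    letter, which makes [read_out] equivariant without any default atom. *)
Definition read_out (p : pof_ty (PProd (T k G) S)) : pof_ty G :=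
  match unembed p.1 with Some g => g | None => head (pdef G) (f [:: p.2]) end.

Lemma pair_embed_supported : supported [::] pair_embed.
Proof.
move=> p _ x; rewrite /pair_embed /=.
exact: (f_equal2 pair (etrans (f_equal _ (embed_pact _ _ _)) (pactK p _)) (pactK p x)).
Qed.

Lemma read_out_supported : supported [::] read_out.
Proof.
move=> p _ [y s]; rewrite /read_out /= unembed_pact.
case: (unembed y) => [g|] /=; first exact: pactK.
have -> : [:: pact (aut_inv p) s] = map (@pact (aut_inv p) S) [:: s] by [].
rewrite (eqv_inv p _ f_eqv); have := f_size [:: s].
by case: (f [:: s]) => [|g []] //= _; apply: pactK.
Qed.

(** f = read_out o (F | id) o pair_embed, a composition of primes. *)
Lemma decoding_cp : comp_primes [::] f.
Proof.
have id_supp : supported [::] (@id (pof_ty S)) by move=> p _ x; rewrite /= pactK.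
have := CP_seq (CP_hom pair_embed_supported)
               (CP_seq (CP_par F_cp (CP_hom id_supp)) (CP_hom read_out_supported)).
congr comp_primes; apply: functional_extensionality => w.
have [-> ->] : unzip1 (map pair_embed w) = map (@embed k S) w /\ unzip2 (map pair_embed w) = w.
  by elim: w => //= x w [-> ->].
rewrite map_id F_embed map_zip_left_inv // => x y.
by rewrite /read_out /= embedK.
Qed.
End Decoding.

Theorem mainTheorem10 (S G : pof) (f : seq (pof_ty S) -> seq (pof_ty G)) (abar : seq atom) :
  equivariant_str f -> comp_primes abar f -> comp_primes [::] f.
Proof.
move=> f_eqv f_cp.
have [/size0nil abar0 | abar_gt0] := posnP (size abar); first by rewrite abar0 in f_cp.
have [F [F_cp F_enc]] := translate abar_gt0 f_cp.
apply: (decoding_cp f_eqv (cp_size f_cp) F_cp).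
exact: enc_to_embed f_eqv (cp_eqv F_cp) F_enc.
Qed.
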